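(* Given a critical tuple $(\mathrm{Block},\mathrm{Gd},\mathrm{Bd})$ as input, the Gap algorithm returns an independent set $P\subseteq\mathcal{U}\setminus F$ such that $$\mathrm{OPT}(P)\ \ge\ \sum_{j\in\mathcal{B}}2^j\Big(\mathrm{uncov}\big(B_F(\mathrm{Bd}(j))\cup B_{\mathcal{U}\setminus F}(\mathrm{Block}(j)\setminus\{j\}),\,B_{\mathcal{U}\setminus F}(j)\big)-\mathrm{indep}\big(B_F(\mathrm{Gd}(j)),\,B_{\mathcal{U}\setminus F}(j)\big)\Big),$$ where $\mathcal{B}=\{i\in\mathbb{Z}:\mathrm{Block}(i)\neq\emptyset\}$.
   Context: $M=(\mathcal{U},\mathcal{I})$ is a matroid; $\mathrm{rank}(X)=\max\{|X'|:X'\subseteq X,X'\in\mathcal{I}\}$, $\mathrm{span}(X)=\{e:\mathrm{rank}(X\cup\{e\})=\mathrm{rank}(X)\}$, $\mathrm{OPT}(X)=\max\{\sum_{e\in X'}\mathrm{val}(e):X'\subseteq X,X'\in\mathcal{I}\}$, $\mathrm{uncov}(R,S)=\mathrm{rank}(R\cup S)-\mathrm{rank}(R)$, $\mathrm{indep}(R,S)=\mathrm{rank}(S\setminus\mathrm{span}(R))$. Standing assumption: elements of rank $0$ have value $0$ and every element of positive value has value $2^i$ for some $i\in\mathbb{Z}$. For $X\subseteq\mathcal{U}$: $B_X(i)=\{e\in X:\mathrm{val}(e)=2^i\}$, $B_X(I)=\bigcup_{i\in I}B_X(i)$. Logarithms base 2. $F\subseteq\mathcal{U}$ is the set of elements revealed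 in a first (observation) stage; afterwards the elements of $\mathcal{U}\setminus F$ are revealed one by one. Critical tuple: $(\mathrm{Block},\mathrm{Gd},\mathrm{Bd})$ where $\mathrm{Block},\mathrm{Gd},\mathrm{Bd}$ are maps from $\mathbb{Z}$ to subsets of $\mathbb{Z}$ such that for all $i\ge j$ with $\mathrm{Block}(i),\mathrm{Block}(j)$ nonempty: (1) $i\in\mathrm{Block}(i)$; (2) if $i>j$ then either $\mathrm{Block}(i)=\mathrm{Block}(j)$ or $\min\mathrm{Block}(i)>\max\mathrm{Block}(j)$; (3) if $\mathrm{Block}(i)=\mathrm{Block}(j)$ then $\mathrm{Gd}(i)=\mathrm{Gd}(j)$ and $\mathrm{Bd}(i)=\mathrm{Bd}(j)$; (4) $\mathrm{Block}(i)\cup\mathrm{Bd}(i)\subseteq\mathrm{Gd}(i)$; (5) if $\min\mathrm{Block}(i)>\max\mathrm{Block}(j)$ then $\mathrm{Bd}(i)\subseteq\mathrm{Gd}(i)\subseteq\mathrm{Bd}(j)\subseteq\mathrm{Gd}(j)$; (6) $\max\mathrm{Block}(i)<\min\mathrm{Bd}(i)$. Gap algorithm with input a critical tuple: start with $P=\emptyset$; immediately after each $e\in\mathcal{U}\setminus F$ is revealed (elements of value $0$ are ignored), let $\ell=\log\mathrm{val}(e)$; if $\mathrm{Block}(\ell)\neq\emptyset$, $e\in\mathrm{span}(B_F(\mathrm{Gd}(\ell)))$ and $e\notin\mathrm{span}(P\cup B_F(\mathrm{Bd}(\ell)))$, then add $e$ to $P$. Output $P$. *)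

From HB Require Import structures.
From mathcomp Require Import all_boot all_order all_algebra.
From mathcomp Require Import boolp classical_sets fsbigop.
Set Implicit Arguments. Unset Strict Implicit. Unset Printing Implicit Defensive.
Import Order.TTheory GRing.Theory Num.Theory.
Local Open Scope ring_scope.
Local Open Scope classical_set_scope.

Section Matroid.
Variable T : finType.
Variable indep : {set T} -> bool.

Definition is_matroid : Prop :=
  [/\ indep (@finset.set0 T),
      (forall A B : {set T}, A \subset B -> indep B -> indep A) &
      (forall A B : {set T}, indep A -> indep B -> #|A| < #|B| ->
         exists2 x, x \in B :\: A & indep (x |: A))]%N.

Definition rank (X : {set T}) : nat :=
  \max_(Y : {set T} | (Y \subset X) && indep Y) #|Y|.

Definition span (X : {set T}) : {set T} :=
  [set e | rank (e |: X) == rank X].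

Definition uncov (Rs S : {set T}) : nat := (rank (Rs :|: S) - rank Rs)%N.

Definition indep_of (Rs S : {set T}) : nat := rank (S :\: span Rs).

Variable R : realFieldType.
Variable val : T -> R.

Definition OPT (X : {set T}) : R :=
  \big[Num.max/0]_(Y : {set T} | (Y \subset X) && indep Y) \sum_(e in Y) val e.

Definition Bset (X : {set T}) (I : set int) : {set T} :=
  [set e in X | `[< exists2 i, I i & val e = (2:R) ^ i >] ].

Definition Bset1 (X : {set T}) (i : int) : {set T} := Bset X [set i].

End Matroid.

(* Critical tuple; "min A > max B" is read as: every element of A exceeds every
   element of B (vacuous for empty sets). *)
Definition critical_tuple (Block Gd Bd : int -> set int) : Prop :=
  forall i j : int, (j <= i)%R -> Block i !=set0 -> Block j !=set0 ->
    [/\ Block i i,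
        ((j < i)%R -> Block i = Block j \/
            (forall a b, Block i a -> Block j b -> (b < a)%R)),
        (Block i = Block j -> Gd i = Gd j /\ Bd i = Bd j),
        (setU (Block i) (Bd i) `<=` Gd i) &
        (((forall a b, Block i a -> Block j b -> (b < a)%R) ->
            [/\ Bd i `<=` Gd i, Gd i `<=` Bd j & Bd j `<=` Gd j]) /\
         (forall a b, Block i a -> Bd i b -> (a < b)%R))].

Section Gap.
Variables (T : finType) (indep : {set T} -> bool) (R : realFieldType) (val : T -> R).
Variables (F : {set T}) (Block Gd Bd : int -> set int).

(* one step of the Gap algorithm upon revelation of e; elements of value 0
   have no level l with val e = 2^l and are thus ignored *)
Definition gap_step (P : {set T}) (e : T) : {set T} :=
  if `[< exists l : int, [/\ val e = (2:R) ^ l, Block l !=set0,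
          e \in span indep (Bset val F (Gd l)) &
          e \notin span indep (P :|: Bset val F (Bd l))] >]
  then e |: P else P.

Definition gap (s : seq T) : {set T} := foldl gap_step (@finset.set0 T) s.

End Gap.

From Pilot Require Import Defs.
From mathcomp Require Import all_boot all_order all_algebra zify boolp.
From mathcomp Require classical_sets fsbigop.
Import Order.TTheory GRing.Theory Num.Theory.
Set Implicit Arguments. Unset Strict Implicit. Unset Printing Implicit Defensive.
Local Open Scope ring_scope.

(* Fix a level j with Block j nonempty and put G := B_F(Gd j), D := B_F(Bd j).
   By the critical-tuple axioms, an element accepted at a level l whose block
   lies below Block j is accepted outside span (P ∪ B_F(Bd l)), which contains
   G, while every other accepted element is spanned by G.  Hence the accepted
   elements below Block j are free over G.  A level-j element of span G that is
   rejected is spanned by P ∪ D, and submodularity lets us discard the free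
   elements: it is spanned by D, the elements of U\F in levels of Block j
   other than j, and the accepted elements P_j of level j.  This bounds the
   uncovered rank at level j by #P_j + indep(G, B_{U\F}(j)); weighting by 2^j and
   summing gives val(P), which is at most OPT(P) since P is independent. *)

Section MatroidRank.
Variables (T : finType) (indep : {set T} -> bool).
Hypothesis matroid_indep : is_matroid indep.
Local Notation rank := (Defs.rank indep).
Local Notation span := (Defs.span indep).

Lemma indep_set0 : indep set0.
Proof. by case: matroid_indep. Qed.

Lemma indepS (A B : {set T}) : A \subset B -> indep B -> indep A.
Proof. by case: matroid_indep => _ + _; apply. Qed.

Lemma leq_card_rank (Y X : {set T}) : Y \subset X -> indep Y -> (#|Y| <= rank X)%N.
Proof. by move=> YX iY; apply: (leq_bigmax_cond Y); rewrite YX iY. Qed.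

Lemma rank_leq_card (X : {set T}) : (rank X <= #|X|)%N.
Proof. by apply/bigmax_leqP => Y /andP[YX _]; apply: subset_leq_card. Qed.

Lemma rank_set0 : rank set0 = 0%N.
Proof. by apply/eqP; rewrite -leqn0 -(cards0 T) rank_leq_card. Qed.

Lemma rankS (X Y : {set T}) : X \subset Y -> (rank X <= rank Y)%N.
Proof.
move=> XY; apply/bigmax_leqP => Z /andP[ZX iZ].
by apply: leq_card_rank => //; apply: subset_trans ZX XY.
Qed.

Lemma rank_witness (X : {set T}) :
  exists2 Y : {set T}, (Y \subset X) && indep Y & #|Y| = rank X.
Proof.
have [|Y YX maxY] := @arg_maxnP _ set0 (fun Y => (Y \subset X) && indep Y) (fun Y => #|Y|).
  by rewrite sub0set indep_set0.
exists Y => //; apply/eqP; rewrite eqn_leq; case/andP: YX => YX iY.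
by rewrite leq_card_rank //=; apply/bigmax_leqP.
Qed.

Lemma indep_rank (X : {set T}) : indep X -> rank X = #|X|.
Proof. by move=> iX; apply/eqP; rewrite eqn_leq rank_leq_card leq_card_rank. Qed.

Lemma indep_extend (I Z : {set T}) : I \subset Z -> indep I ->
  exists J : {set T}, [/\ I \subset J, J \subset Z, indep J & #|J| = rank Z].
Proof.
move=> IZ iI.
have P0 : [&& I \subset I, I \subset Z & indep I] by rewrite subxx IZ iI.
have [J /and3P[IJ JZ iJ] maxJ] :=
  @arg_maxnP _ I (fun J => [&& I \subset J, J \subset Z & indep J]) (fun J => #|J|) P0.
exists J; split => //.
apply/eqP; rewrite eqn_leq leq_card_rank //= leqNgt; apply/negP => ltJZ.
have [K /andP[KZ iK] rankK] := rank_witness Z; rewrite -rankK in ltJZ.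
case: matroid_indep => _ _ /(_ J K iJ iK ltJZ) [x /setDP[xK xJ] ixJ].
have /maxJ : [&& I \subset x |: J, x |: J \subset Z & indep (x |: J)].
  by rewrite ixJ (subset_trans IJ (subsetUr _ _)) subUset JZ sub1set (subsetP KZ).
by rewrite cardsU1 xJ /= ltnn.
Qed.

Lemma rank_submod (A B : {set T}) :
  (rank (A :|: B) + rank (A :&: B) <= rank A + rank B)%N.
Proof.
have [I /andP[IAB iI] <-] := rank_witness (A :&: B).
have IAuB : I \subset A :|: B.
  exact: subset_trans IAB (subset_trans (subsetIl _ _) (subsetUl _ _)).
have [J [IJ JAB iJ <-]] := indep_extend IAuB iI.
apply: (@leq_trans (#|J :&: A| + #|J :&: B|)); last first.
  by rewrite leq_add // leq_card_rank ?subsetIr // (indepS (subsetIl _ _) iJ).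
rewrite -(cardsUI (J :&: A)) -setIUr (setIidPl JAB) leq_add2l subset_leq_card //.
by rewrite setIACA setIid subsetI IJ.
Qed.

Lemma rankU_leq (A B : {set T}) : (rank (A :|: B) <= rank A + rank B)%N.
Proof. exact: leq_trans (leq_addr _ _) (rank_submod A B). Qed.

Lemma rankU_leq_card (A B : {set T}) : (rank (A :|: B) <= rank A + #|B|)%N.
Proof. by apply: leq_trans (rankU_leq A B) _; rewrite leq_add2l rank_leq_card. Qed.

Lemma sub_span (X : {set T}) : X \subset span X.
Proof.
apply/subsetP => e eX; rewrite inE.
by have -> : e |: X = X by apply/setUidPr; rewrite sub1set.
Qed.

Lemma spanS (X Z : {set T}) : X \subset Z -> span X \subset span Z.
Proof.
move=> XZ; apply/subsetP => e; rewrite !inE => /eqP rankeX.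
rewrite eqn_leq [X in _ && X]rankS ?subsetUr // andbT.
have := rank_submod Z (e |: X); rewrite setUCA (setUidPl XZ) rankeX.
have : (rank X <= rank (Z :&: (e |: X)))%N by rewrite rankS // subsetI XZ subsetUr.
lia.
Qed.

Lemma rankU_span (X Y : {set T}) : Y \subset span X -> rank (X :|: Y) = rank X.
Proof.
rewrite -[Y]set_enum; elim: (enum Y) => [|y s IHs]; first by rewrite set_nil setU0.
rewrite set_cons subUset sub1set => /andP[yX sX].
move: (subsetP (spanS (subsetUl X [set:: s])) y yX).
by rewrite inE setUCA => /eqP ->; apply: IHs.
Qed.

Lemma span_trans (Y Z : {set T}) : Y \subset span Z -> span Y \subset span Z.
Proof.
move=> YZ; apply/subsetP => e eY; rewrite inE eqn_leq [X in _ && X]rankS ?subsetUr // andbT.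
move: (subsetP (spanS (subsetUr Z Y)) e eY); rewrite inE (rankU_span YZ) => /eqP <-.
by rewrite rankS // setUS // subsetUl.
Qed.

Lemma rankU1_notin_span (X : {set T}) e :
  e \notin span X -> rank (e |: X) = (rank X).+1.
Proof.
rewrite inE => neX; apply/eqP; rewrite eqn_leq ltn_neqAle eq_sym neX rankS ?subsetUr //=.
by rewrite setUC -addn1 -(cards1 e) rankU_leq_card.
Qed.

Lemma indepU1 (X : {set T}) e : indep X -> e \notin span X -> indep (e |: X).
Proof.
move=> iX neX; have [Y /andP[YX iY] cardY] := rank_witness (e |: X).
suff -> : e |: X = Y by [].
apply/eqP; rewrite eq_sym eqEcard YX cardY rankU1_notin_span // indep_rank // cardsU1.
by rewrite (contra (subsetP (sub_span X) e) neX) add1n ltnSn.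
Qed.

Lemma span_drop_free (G L Q D : {set T}) a :
    D \subset G -> Q \subset span G -> rank (G :|: (L :|: Q)) = (rank G + #|L|)%N ->
  a \in span G -> a \in span (L :|: Q :|: D) -> a \in span (Q :|: D).
Proof.
move=> DG QG rankGLQ aG aLQD; rewrite inE eqn_leq [X in _ && X]rankS ?subsetUr // andbT.
set A := G :|: (a |: Q); set B := L :|: Q :|: D :|: [set a].
have rankA : rank A = rank G by rewrite rankU_span // subUset sub1set aG QG.
have rankB : (rank B <= rank (Q :|: D) + #|L|)%N.
  by rewrite /B rankU_span ?sub1set // -setUA setUC rankU_leq_card.
have rankAB : (rank G + #|L| <= rank (A :|: B))%N.
  rewrite -rankGLQ rankS // setUSS ?subsetUl //.
  by apply: subset_trans (subsetUl _ _); apply: subsetUl.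
have rankAIB : (rank (a |: (Q :|: D)) <= rank (A :&: B))%N.
  apply: rankS; apply/subsetP => x; move: (subsetP DG x); rewrite !inE.
  by case: (x == a) (x \in G) (x \in Q) (x \in L) (x \in D) => [] [] [] [] [] //= /(_ isT).
have := rank_submod A B; rewrite rankA; lia.
Qed.

Lemma uncov_leq (X G U P : {set T}) : U :&: span G \subset span (X :|: P) ->
  (uncov indep X U <= #|P| + indep_of indep G U)%N.
Proof.
move=> UG; rewrite /uncov /indep_of.
have : (rank (X :|: U) <= rank (X :|: P :|: U :&: span G) + rank (U :\: span G))%N.
  apply: leq_trans (rankU_leq _ _); apply: rankS.
  by rewrite -{1}(setID U (span G)) setUA setSU // setSU // subsetUl.
rewrite (rankU_span UG); have := rankU_leq_card X P; lia.
Qed.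

Lemma uncov_set0 (X : {set T}) : uncov indep X set0 = 0%N.
Proof. by rewrite /uncov setU0 subnn. Qed.

Lemma indep_of_set0 (G : {set T}) : indep_of indep G set0 = 0%N.
Proof. by rewrite /indep_of set0D rank_set0. Qed.

End MatroidRank.

Lemma sum_le_OPT (T : finType) (indep : {set T} -> bool) (R : realFieldType)
    (val : T -> R) (P : {set T}) :
  indep P -> \sum_(e in P) val e <= OPT indep val P.
Proof.
by move=> iP; rewrite /OPT (le_bigmax_cond _ (j := P)) // subxx iP.
Qed.

Section Levels.
Variables (T : finType) (R : realFieldType) (val : T -> R).

(* The junk level 0 of an element whose value is not a power of 2 is never
   used: the algorithm only looks at levels l with val e = 2 ^ l. *)
Definition level (e : T) : int :=
  if pselect (exists i : int, val e = 2 ^ i) is left h then projT1 (cid h) else 0.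

Lemma exp2z_inj (i k : int) : (2 : R) ^ i = 2 ^ k -> i = k.
Proof. by apply: ieexprIz; rewrite ?ltr0n // pnatr_eq1. Qed.

Lemma levelE e i : val e = 2 ^ i -> level e = i.
Proof.
rewrite /level => vei; case: pselect => [h|[]]; last by exists i.
by case: (cid h) => k /= vek; apply: exp2z_inj; rewrite -vek -vei.
Qed.

Lemma mem_Bset (X : {set T}) (I : int -> Prop) e i :
  e \in X -> I i -> val e = 2 ^ i -> e \in Bset val X I.
Proof. by move=> eX Ii vei; rewrite inE eX; apply/asboolP; exists i. Qed.

Lemma BsetS (X : {set T}) (I J : int -> Prop) :
  (forall i, I i -> J i) -> Bset val X I \subset Bset val X J.
Proof.
move=> IJ; apply/subsetP => e; rewrite !inE => /andP[-> /asboolP[i Ii vei]].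
by apply/asboolP; exists i => //; apply: IJ.
Qed.

Lemma Bset1P (X : {set T}) j e :
  e \in Bset1 val X j -> e \in X /\ val e = 2 ^ j.
Proof. by rewrite inE => /andP[-> /asboolP[i /= -> ->]]. Qed.

Lemma Bset1_eq0 (X : {set T}) j : (forall e, level e != j) -> Bset1 val X j = set0.
Proof.
move=> no_j; apply/setP => e; rewrite in_set0; apply/negP => /Bset1P[_ /levelE ej].
by move: (no_j e); rewrite ej eqxx.
Qed.

End Levels.

Definition block_lt (Block : int -> int -> Prop) (l j : int) : Prop :=
  forall a b, Block j a -> Block l b -> b < a.

Section CriticalTuple.
Variables (Block Gd Bd : int -> int -> Prop).
Hypothesis critical : critical_tuple Block Gd Bd.

Lemma mem_Block l : (exists x, Block l x) -> Block l l.
Proof. by move=> Bl; case: (critical (lexx l) Bl Bl). Qed.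

Variable j : int.
Hypothesis Block_j : exists x, Block j x.

Lemma Bd_sub_Gd x : Bd j x -> Gd j x.
Proof.
by move=> Bdx; case: (critical (lexx j) Block_j Block_j) => _ _ _ BGd _; apply: BGd; right.
Qed.

Lemma Gd_sub_Bd_lt l : (exists x, Block l x) -> block_lt Block l j ->
  forall x, Gd j x -> Bd l x.
Proof.
move=> Bl lt_lj; have lj : l < j by apply: lt_lj; apply: mem_Block.
by case: (critical (ltW lj) Block_j Bl) => _ _ _ _ [/(_ lt_lj)[]].
Qed.

Lemma block_not_lt l : (exists x, Block l x) -> ~ block_lt Block l j ->
  (Block l = Block j /\ Gd l = Gd j) \/ (forall x, Gd l x -> Bd j x).
Proof.
move=> Bl nlt; case: (ltgtP l j) => [lj|jl|->]; last by left.
- case: (critical (ltW lj) Block_j Bl) => _ /(_ lj)[Blj|//] GBd _ _.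
  by left; split => //; case: (GBd Blj).
- case: (critical (ltW jl) Bl Block_j) => _ /(_ jl)[Blj|lt_jl] GBd _ [sub _].
    by left; split => //; case: (GBd Blj).
  by right; case: (sub lt_jl).
Qed.

Lemma Gd_sub_Gd_not_lt l : (exists x, Block l x) -> ~ block_lt Block l j ->
  forall x, Gd l x -> Gd j x.
Proof.
by move=> Bl nlt x; case: (block_not_lt Bl nlt) => [[_ ->] //|GBd /GBd/Bd_sub_Gd].
Qed.

End CriticalTuple.

Section Gap.
Variables (T : finType) (indep : {set T} -> bool) (R : realFieldType) (val : T -> R).
Variables (F : {set T}) (Block Gd Bd : int -> int -> Prop).
Hypothesis matroid_indep : is_matroid indep.
Hypothesis critical : critical_tuple Block Gd Bd.
Local Notation rank := (Defs.rank indep).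
Local Notation span := (Defs.span indep).
Local Notation gap := (Defs.gap indep val F Block Gd Bd).
Local Notation gap_step := (Defs.gap_step indep val F Block Gd Bd).
Local Notation level := (level val).
Local Notation BF := (Bset val F).

Definition gap_accepts (P : {set T}) (e : T) (l : int) : Prop :=
  [/\ val e = 2 ^ l, exists x, Block l x,
      e \in span (BF (Gd l)) & e \notin span (P :|: BF (Bd l))].

Lemma gap_stepP P e :
  (gap_step P e = P /\ ~ exists l, gap_accepts P e l) \/
  (exists2 l, gap_step P e = e |: P & gap_accepts P e l).
Proof. by rewrite /gap_step; case: asboolP => [[l acc]|rej]; [right; exists l | left]. Qed.

Lemma gap_rcons s e : gap (rcons s e) = gap_step (gap s) e.
Proof. by rewrite /gap foldl_rcons. Qed.

Lemma gap_rcons_sub s e : gap s \subset gap (rcons s e).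
Proof.
by rewrite gap_rcons; case: (gap_stepP (gap s) e) => [[-> _]|[l -> _]]; rewrite ?subsetUr.
Qed.

Lemma gap_spec s :
  [/\ indep (gap s), {subset gap s <= s} &
      forall p, p \in gap s -> [/\ val p = 2 ^ level p, exists x, Block (level p) x
                                 & p \in span (BF (Gd (level p)))]].
Proof.
elim/last_ind: s => [|s e [iP Ps Pspec]].
  by split => [|p|p]; rewrite ?inE ?indep_set0.
have sub_rcons p : p \in s -> p \in rcons s e by rewrite mem_rcons inE orbC => ->.
rewrite gap_rcons; case: (gap_stepP (gap s) e) => [[-> _]|[l -> [vel Bl eGd neP]]].
  by split => // p /Ps /sub_rcons.
split.
- by apply: indepU1 => //; apply: contra neP; apply/subsetP/(spanS matroid_indep)/subsetUl.
- move=> p; rewrite in_setU1 => /predU1P[->|/Ps/sub_rcons //].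
  by rewrite mem_rcons mem_head.
- by move=> p; rewrite in_setU1 => /predU1P[->|/Pspec //]; rewrite (levelE vel).
Qed.

Definition levels : seq int :=
  [seq l <- undup [seq level e | e <- enum T] | `[< exists x, Block l x >]].

Lemma mem_levels e : (exists x, Block (level e) x) -> level e \in levels.
Proof.
by move=> Bl; rewrite mem_filter mem_undup map_f ?mem_enum // andbT; apply/asboolP.
Qed.

Lemma sum_gap_by_level s :
  \sum_(e in gap s) val e =
  \sum_(l <- levels) 2 ^ l * #|[set p in gap s | level p == l]|%:R.
Proof.
have [_ _ Pspec] := gap_spec s.
have val_levels e : e \in gap s -> val e = \sum_(l <- levels) 2 ^ l * (level e == l)%:R.
  move=> eP; have [vel Bl _] := Pspec e eP.
  rewrite (bigD1_seq (level e)) ?mem_levels ?filter_uniq ?undup_uniq //= eqxx mulr1.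
  by rewrite big1 ?addr0 // => l; rewrite eq_sym => /negbTE ->; rewrite mulr0.
rewrite (eq_bigr _ val_levels) exchange_big; apply: eq_bigr => l _.
rewrite -mulr_sumr -natr_sum; congr (_ * _%:R).
rewrite -sum1_card [RHS]big_mkcond [LHS]big_mkcond /=.
by apply: eq_bigr => e _; rewrite inE; case: (e \in gap s).
Qed.

Variable j : int.
Hypothesis Block_j : exists x, Block j x.
Local Notation G := (BF (Gd j)).
Local Notation D := (BF (Bd j)).

Definition gap_below (P : {set T}) : {set T} :=
  [set p in P | `[< block_lt Block (level p) j >]].

Lemma gap_below_sub P : gap_below P \subset P.
Proof. by apply/subsetP => p; rewrite inE => /andP[]. Qed.

Lemma rank_Gd_gap s : rank (G :|: gap s) = (rank G + #|gap_below (gap s)|)%N.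
Proof.
elim/last_ind: s => [|s e IHs].
  rewrite setU0 (_ : gap_below _ = set0) ?cards0 ?addn0 //.
  by apply/setP => x; rewrite !inE.
rewrite gap_rcons; case: (gap_stepP (gap s) e) => [[-> _] //|[l -> [vel Bl eGd neP]]].
have eP : e \notin gap s.
  by apply: contra neP => eP; rewrite (subsetP (sub_span _ _)) // inE eP.
case: (pselect (block_lt Block l j)) => [lt_lj|not_lt_lj].
  have -> : gap_below (e |: gap s) = e |: gap_below (gap s).
    apply/setP => x; rewrite !inE; case: (eqVneq x e) => [->|//].
    by rewrite (levelE vel); apply/asboolP.
  rewrite setUCA cardsU1 inE (negbTE eP) rankU1_notin_span ?IHs ?addnS //.
  apply: contra neP; apply/subsetP/(spanS matroid_indep); rewrite setUC setUS //.
  exact/BsetS/(Gd_sub_Bd_lt critical Block_j Bl lt_lj).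
have -> : gap_below (e |: gap s) = gap_below (gap s).
  apply/setP => x; rewrite !inE; case: (eqVneq x e) => [->|//].
  by rewrite (negbTE eP) (levelE vel); apply/negbTE/asboolP.
rewrite setUCA.
suff : e \in span (G :|: gap s) by rewrite inE => /eqP ->.
apply: subsetP eGd; apply/(spanS matroid_indep)/subset_trans/subsetUl.
exact/BsetS/(Gd_sub_Gd_not_lt critical Block_j Bl not_lt_lj).
Qed.

Lemma gap_spans_level s a :
  a \in s -> val a = 2 ^ j -> a \in span G -> a \in span (gap s :|: D).
Proof.
elim/last_ind: s => [//|s e IHs]; rewrite mem_rcons inE => /predU1P[-> vej eG|aS vaj aG].
  rewrite gap_rcons; case: (gap_stepP (gap s) e) => [[-> rej]|[l -> _]].
    by apply: contraT => neP; case: rej; exists j.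
  by rewrite (subsetP (sub_span _ _)) // !inE eqxx.
by apply: subsetP (IHs aS vaj aG); apply/(spanS matroid_indep)/setSU/gap_rcons_sub.
Qed.

Lemma gap_above_sub_span s : gap s :\: gap_below (gap s) \subset span G.
Proof.
have [_ _ Pspec] := gap_spec s.
apply/subsetP => q; rewrite in_setD inE => /andP[+ qP]; rewrite qP => /asboolP not_lt.
have [_ Bq qGd] := Pspec q qP.
apply: subsetP qGd; apply/(spanS matroid_indep)/BsetS.
exact: (Gd_sub_Gd_not_lt critical Block_j Bq not_lt).
Qed.

Lemma gap_above_Bd_sub_span s (X0 : int -> Prop) :
    {subset s <= ~: F} -> (forall l, Block j l -> l <> j -> X0 l) ->
  gap s :\: gap_below (gap s) :|: D \subset
    span (D :|: Bset val (~: F) X0 :|: [set p in gap s | level p == j]).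
Proof.
move=> sF X0_Block; have [_ Ps Pspec] := gap_spec s.
set X := _ :|: _ :|: _; have XX : X \subset span X := sub_span indep X.
have DX : D \subset X by rewrite /X -setUA subsetUl.
rewrite subUset (subset_trans DX XX) andbT.
apply/subsetP => q; rewrite in_setD inE => /andP[+ qP]; rewrite qP => /asboolP not_lt.
have [vq Bq qGd] := Pspec q qP.
case: (eqVneq (level q) j) => [qj|qnj].
  by apply: (subsetP XX); rewrite !inE qP qj eqxx !orbT.
case: (block_not_lt critical Block_j Bq not_lt) => [[Bqj _]|GBd].
  apply: (subsetP XX); rewrite !in_setU (mem_Bset (I := X0) (sF q (Ps q qP)) _ vq) ?orbT //.
  by apply: X0_Block; [rewrite -Bqj; apply: mem_Block critical _ Bq | apply/eqP].
apply: subsetP qGd; apply: (span_trans matroid_indep).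
by apply: subset_trans XX; apply: subset_trans DX; apply: BsetS.
Qed.

Lemma gap_level_bound s (X0 : int -> Prop) :
    s =i ~: F -> (forall l, Block j l -> l <> j -> X0 l) ->
  (uncov indep (D :|: Bset val (~: F) X0) (Bset1 val (~: F) j)
     <= #|[set p in gap s | level p == j]| + indep_of indep G (Bset1 val (~: F) j))%N.
Proof.
move=> mem_s X0_Block; have sF : {subset s <= ~: F} by move=> a; rewrite mem_s.
have DG : D \subset G := BsetS _ _ (Bd_sub_Gd critical Block_j).
have split_gap : gap_below (gap s) :|: (gap s :\: gap_below (gap s)) = gap s.
  by rewrite setDE setUIr setUCr setIT (setUidPr (gap_below_sub _)).
apply: uncov_leq => //; apply/subsetP => a; rewrite inE => /andP[aU aG].
have [aF vaj] := Bset1P aU.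
have aPD := gap_spans_level (etrans (mem_s a) aF) vaj aG; rewrite -split_gap in aPD.
apply: (subsetP (span_trans matroid_indep (gap_above_Bd_sub_span sF X0_Block))).
apply: (span_drop_free matroid_indep DG (gap_above_sub_span s) _ aG aPD).
by rewrite split_gap rank_Gd_gap.
Qed.
End Gap.

Import classical_sets fsbigop.
Local Open Scope classical_set_scope.

Lemma fsbig_levels (T : finType) (R : realFieldType) (val : T -> R)
    (Block : int -> set int) (V : nmodType) (f : int -> V) :
  (forall l, (forall e, level val e != l) -> f l = 0) ->
  \sum_(l \in [set i | Block i !=set0]) f l = \sum_(l <- levels val Block) f l.
Proof.
move=> f0; have lB l : l \in levels val Block -> Block l !=set0.
  by rewrite mem_filter => /andP[/asboolP].
rewrite (fsbigE (levels val Block)) ?filter_uniq ?undup_uniq //.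
- by rewrite -big_filter (all_filterP _) //; apply/allP => l /lB; rewrite in_setE.
- move=> l Bl nl; apply: f0 => e; apply: contra nl => /eqP lel.
  by rewrite -lel mem_levels // lel.
Qed.

Theorem theorem2 (T : finType) (indep : {set T} -> bool) (R : realFieldType)
  (val : T -> R) (F : {set T}) (Block Gd Bd : int -> set int) (s : seq T) :
  is_matroid indep ->
  (forall e, 0 <= val e) ->
  (forall e, rank indep [set e] = 0%N -> val e = 0) ->
  (forall e, 0 < val e -> exists i : int, val e = (2:R) ^ i) ->
  critical_tuple Block Gd Bd ->
  perm_eq s (enum (~: F)) ->
  let P := gap indep val F Block Gd Bd s in
  [/\ indep P, P \subset ~: F &
      OPT indep val P >=
      \sum_(j \in [set i : int | Block i !=set0])
        (2:R) ^ j *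
        ((uncov indep (Bset val F (Bd j) :|: Bset val (~: F) (Block j `\ j))
                      (Bset1 val (~: F) j))%:R
         - (indep_of indep (Bset val F (Gd j)) (Bset1 val (~: F) j))%:R)].
Proof.
move=> matroid _ _ _ critical /perm_mem mem_s P.
have {}mem_s : s =i ~: F by move=> a; rewrite mem_s mem_enum.
have [iP Ps _] := gap_spec val F Block Gd Bd matroid s.
split => //; first by apply/fintype.subsetP => p /Ps; rewrite mem_s.
apply: le_trans (sum_le_OPT val iP).
rewrite sum_gap_by_level // (fsbig_levels (val := val)).
  rewrite !big_seq; apply: ler_sum => l; rewrite mem_filter => /andP[/asboolP Bl _].
  rewrite ler_wpM2l ?exprz_ge0 // lerBlDr -natrD ler_nat.
  exact: (gap_level_bound val matroid critical Bl (X0 := Block l `\ l) mem_s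
           (fun _ Bl' l'j => conj Bl' l'j)).
by move=> l /Bset1_eq0 ->; rewrite uncov_set0 indep_of_set0 subrr mulr0.
Qed.
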